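(* Let $\mathbb{F}\in\{\mathbb{R},\mathbb{C}\}$ and $M>N$. Let $\Phi=\{\varphi_i\}_{i=1}^M$ be a Parseval frame for $\mathbb{F}^N$ and let $\Psi=\{\psi_i\}_{i=1}^M$ be a Naimark complement of $\Phi$. Then $TC(\Phi)=TC(\Psi)$.
   Context: A Parseval frame for $\mathbb{F}^N$ is a family $\Phi=\{\varphi_i\}_{i=1}^M\subseteq\mathbb{F}^N$ such that, viewing $\Phi$ as the $N\times M$ matrix with columns $\varphi_i$, $\Phi\Phi^*=I$. A Naimark complement of a Parseval frame $\Phi$ for $\mathbb{F}^N$ is any family $\Psi=\{\psi_i\}_{i=1}^M\subseteq\mathbb{F}^{M-N}$ with $\Psi^*\Psi=I-\Phi^*\Phi$ (it is then a Parseval frame for $\mathbb{F}^{M-N}$). The total coherence of a family $\Phi$ is $TC(\Phi)=\sum_{i\neq j}|\langle\varphi_i,\varphi_j\rangle|$. *)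

(* F = R is modelled by an arbitrary 'R : realType' (the real
   numbers), F = C by 'R[i]' = complex R (mathcomp-real-closed). *)
From HB Require Import structures.
From mathcomp Require Import all_boot all_order all_algebra.
From mathcomp Require Import reals complex.
Set Implicit Arguments. Unset Strict Implicit. Unset Printing Implicit Defensive.
Import Order.TTheory GRing.Theory Num.Theory.
Local Open Scope ring_scope.

(* conjugate transpose A^* of a matrix over a field with conjugation
   (for the real case we use a realType where conjugation is trivial;
   we use the plain transpose there). *)
Definition adjmx (C : numClosedFieldType) m n (A : 'M[C]_(m, n)) : 'M[C]_(n, m) :=
  (map_mx Num.conj A)^T.

(* ---- Real case: a family of M vectors in R^N is an N x M matrix (columns) *)
Definition parseval_R (R : realType) N M (Phi : 'M[R]_(N, M)) : Prop :=
  Phi *m Phi^T = 1%:M.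

Definition naimark_R (R : realType) N M (Phi : 'M[R]_(N, M))
  (Psi : 'M[R]_(M - N, M)) : Prop :=
  Psi^T *m Psi = 1%:M - Phi^T *m Phi.

(* <phi_i, phi_j> = (Phi^T Phi)_{j i}; total coherence sums over i <> j *)
Definition TC_R (R : realType) K M (Phi : 'M[R]_(K, M)) : R :=
  \sum_(i < M) \sum_(j < M | j != i) `|(Phi^T *m Phi) j i|.

Definition parseval_C (R : realType) N M (Phi : 'M[R[i]]_(N, M)) : Prop :=
  Phi *m adjmx Phi = 1%:M.

Definition naimark_C (R : realType) N M (Phi : 'M[R[i]]_(N, M))
  (Psi : 'M[R[i]]_(M - N, M)) : Prop :=
  adjmx Psi *m Psi = 1%:M - adjmx Phi *m Phi.

Definition TC_C (R : realType) K M (Phi : 'M[R[i]]_(K, M)) : R[i] :=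
  \sum_(i < M) \sum_(j < M | j != i) `|(adjmx Phi *m Phi) j i|.

(* The Gram matrix of a Naimark complement is the identity minus the Gram
   matrix of the frame, so the two Gram matrices have opposite off-diagonal
   entries and hence the same total coherence. *)
From HB Require Import structures.
From mathcomp Require Import all_boot all_order all_algebra.
From mathcomp Require Import reals complex.
Import Order.TTheory GRing.Theory Num.Theory.
Local Open Scope ring_scope.

Definition offdiag_norm_sum {C : numDomainType} {M} (A : 'M[C]_M) : C :=
  \sum_(i < M) \sum_(j < M | j != i) `|A j i|.

Lemma offdiag_norm_sum_subIm (C : numDomainType) M (A : 'M[C]_M) :
  offdiag_norm_sum (1%:M - A) = offdiag_norm_sum A.
Proof.
apply: eq_bigr => i _; apply: eq_bigr => j ji.
by rewrite !mxE (negbTE ji) sub0r normrN.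
Qed.

Lemma TC_R_offdiag (R : realType) K M (Phi : 'M[R]_(K, M)) :
  TC_R Phi = offdiag_norm_sum (Phi^T *m Phi).
Proof. by []. Qed.

Lemma TC_C_offdiag (R : realType) K M (Phi : 'M[R[i]]_(K, M)) :
  TC_C Phi = offdiag_norm_sum (adjmx Phi *m Phi).
Proof. by []. Qed.

Theorem proposition1 :
  (forall (R : realType) (N M : nat) (Phi : 'M[R]_(N, M)) (Psi : 'M[R]_(M - N, M)),
      (N < M)%N -> parseval_R Phi -> naimark_R Phi Psi -> TC_R Phi = TC_R Psi)
  /\
  (forall (R : realType) (N M : nat) (Phi : 'M[R[i]]_(N, M)) (Psi : 'M[R[i]]_(M - N, M)),
      (N < M)%N -> parseval_C Phi -> naimark_C Phi Psi -> TC_C Phi = TC_C Psi).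
Proof.
split=> R N M Phi Psi _ _ gramPsi.
- by rewrite !TC_R_offdiag gramPsi offdiag_norm_sum_subIm.
- by rewrite !TC_C_offdiag gramPsi offdiag_norm_sum_subIm.
Qed.
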